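(* Let $d,e,n$ be positive integers with $n>1$, $\gcd(e,n)=1$, and $d\cdot e\equiv 1 \pmod{\lambda(n)}$. Then $\omega_e(\omega_e(n))>0$, and $$d\equiv e^{\,\omega_e(\omega_e(n))-1} \pmod{\omega_e(n)}.$$
   Context: For integers $m$ and $N\ge 1$, define $\omega_m(N)=\min\{k\in\mathbb{N}: k>0,\ m^k\equiv 1\pmod N\}$ (the multiplicative order of $m$ modulo $N$) if $\gcd(m,N)=1$, and $\omega_m(N)=0$ if $\gcd(m,N)\ne 1$. The Carmichael function $\lambda$ is defined as follows: if $n=\prod_{i=1}^r p_i^{\alpha_i}$ is the prime factorization of $n$, then $\lambda(n)=\mathrm{lcm}\,(\lambda(p_1^{\alpha_1}),\dots,\lambda(p_r^{\alpha_r}))$, where $\lambda(p^{\alpha})=2^{\alpha-2}$ if $p=2$ and $\alpha\ge 3$, and $\lambda(p^\alpha)=p^{\alpha-1}(p-1)$ otherwise. *)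

From mathcomp Require Import all_boot.
From mathcomp Require Import cyclic.
Set Implicit Arguments. Unset Strict Implicit. Unset Printing Implicit Defensive.

Definition omega_pred (m N : nat) : pred nat :=
  fun k => (0 < k) && (m ^ k == 1 %[mod N]).

Lemma omega_ex (m N : nat) : coprime m N -> exists k, omega_pred m N k.
Proof.
case: N => [|N] cop.
  exists 1; rewrite /omega_pred /=; move: cop; rewrite /coprime gcdn0 => /eqP ->.
  by rewrite expn1.
exists (totient N.+1); apply/andP; split; first by rewrite totient_gt0.
by apply/eqP; apply: Euler_exp_totient.
Qed.

Definition omega (m N : nat) : nat :=
  match @idP (coprime m N) with
  | ReflectT h => ex_minn (omega_ex h)
  | ReflectF _ => 0
  end.

Definition lambda_pp (p a : nat) : nat :=
  if (p == 2) && (3 <= a) then 2 ^ (a - 2) else p ^ (a - 1) * (p - 1).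

Definition carmichael (n : nat) : nat :=
  \big[lcmn/1]_(p <- primes n) lambda_pp p (logn p n).

From mathcomp Require Import all_boot.
From mathcomp Require Import cyclic.
From mathcomp Require Import zify.

Set Implicit Arguments.
Unset Strict Implicit.
Unset Printing Implicit Defensive.

(* Carmichael's theorem e ^ lambda(n) = 1 (mod n) for e coprime to n shows that
   k := omega_e(n) divides lambda(n), so d * e = 1 (mod k).  Hence e is a unit
   modulo k, and with m := omega_e(k) > 0 we get
   d = d * e ^ m = (d * e) * e ^ (m - 1) = e ^ (m - 1) (mod k).
   Carmichael's theorem is checked prime power by prime power: Euler's theorem
   for odd primes, and for 2 ^ a the fact that squaring an odd number doubles
   the 2-part of its distance to 1. *)

Lemma omega_spec m N : coprime m N ->
  [/\ 0 < omega m N, m ^ omega m N = 1 %[mod N] &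
      forall k, 0 < k -> m ^ k = 1 %[mod N] -> omega m N <= k].
Proof.
rewrite /omega; case: {-}_ / idP => // cop _.
case: ex_minnP => w /andP[w_gt0 /eqP mw1] w_min; split=> // k k_gt0 mk1.
by apply: w_min; rewrite /omega_pred k_gt0; apply/eqP.
Qed.

Lemma expn_modn_period m N w j : m ^ w = 1 %[mod N] -> m ^ j = m ^ (j %% w) %[mod N].
Proof.
move=> mw1; rewrite {1}(divn_eq j w) expnD (mulnC (j %/ w)) expnM -modnMml.
by rewrite -(modnXm _ N (m ^ w)) mw1 modnXm exp1n modnMml mul1n.
Qed.

Lemma omega_dvdn m N j : coprime m N -> m ^ j = 1 %[mod N] -> omega m N %| j.
Proof.
move=> cop mj1; have [w_gt0 mw1 w_min] := omega_spec cop.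
have mr1 : m ^ (j %% omega m N) = 1 %[mod N] by rewrite -(expn_modn_period _ mw1).
rewrite /dvdn; apply: contraT; rewrite -lt0n => r_gt0.
by have := w_min _ r_gt0 mr1; rewrite leqNgt ltn_pmod.
Qed.

Lemma dvdn_pow2_sqr_sub1 y k : odd y -> 2 ^ k.+1 %| y - 1 -> 2 ^ k.+2 %| y ^ 2 - 1.
Proof.
move=> odd_y dvd_y1; rewrite -(exp1n 2) subn_sqr expnSr dvdn_mul //.
by rewrite dvdn2 oddD odd_y.
Qed.

Lemma odd_exp_pow2 e k : odd e -> e ^ 2 ^ k.+1 = 1 %[mod 2 ^ k.+3].
Proof.
move=> odd_e; have e_gt0 : 0 < e by case: e odd_e.
apply/eqP; rewrite eqn_mod_dvd ?expn_gt0 ?e_gt0 //.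
elim: k => [|k IHk]; last first.
  rewrite [2 ^ k.+2]expnS (mulnC 2) expnM.
  by apply: dvdn_pow2_sqr_sub1 IHk; rewrite oddX odd_e orbT.
have [t ->] : exists t, e = t.*2.+1 by exists e./2; rewrite -{1}(odd_double_half e) odd_e.
rewrite expn1.
have -> : t.*2.+1 ^ 2 - 1 = 4 * (t * t.+1) by rewrite -mul2n; nia.
by rewrite (_ : 2 ^ 3 = 4 * 2) // dvdn_pmul2l // dvdn2 oddM /= andbN.
Qed.

Lemma lambda_pp_exp e p a : prime p -> 0 < a -> coprime e p ->
  e ^ lambda_pp p a = 1 %[mod p ^ a].
Proof.
move=> p_pr a_gt0 cop; rewrite /lambda_pp.
case: ifP => [/andP[/eqP p2 a_ge3] | _].
  subst p; rewrite -(subnKC a_ge3) addSn subSS subn1 /=.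
  by apply: odd_exp_pow2; rewrite -coprimen2.
rewrite mulnC !subn1 -totient_pfactor //.
by apply: Euler_exp_totient; rewrite coprime_pexpr.
Qed.

Lemma lambda_pp_dvd_carmichael p n :
  p \in primes n -> lambda_pp p (logn p n) %| carmichael n.
Proof. by move=> p_n; rewrite /carmichael (big_rem p) //= dvdn_lcml. Qed.

Lemma carmichael_exp e n : coprime e n -> e ^ carmichael n = 1 %[mod n].
Proof.
have [-> | n_gt0 cop] := posnP n.
  by rewrite /coprime gcdn0 => /eqP ->; rewrite exp1n.
apply/eqP/modn_partP => // p /[dup] p_n; rewrite [_ \in _]mem_primes.
case/and3P => p_pr _ p_dvd_n.
have [q ->] := dvdnP (lambda_pp_dvd_carmichael p_n).
rewrite mulnC expnM p_part -modnXm lambda_pp_exp ?modnXm ?exp1n ?logn_gt0 //.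
exact: coprime_dvdr p_dvd_n cop.
Qed.

Lemma coprime_of_mul_modn1 d e k : d * e = 1 %[mod k] -> coprime e k.
Proof.
move=> de1; have := coprime1n k.
by rewrite -coprime_modl -de1 coprime_modl coprimeMl => /andP[].
Qed.

Lemma modn_inv_expn d e k m : 0 < m ->
  d * e = 1 %[mod k] -> e ^ m = 1 %[mod k] -> d = e ^ (m - 1) %[mod k].
Proof.
move=> m_gt0 de1 em1.
rewrite -(muln1 d) -modnMmr -em1 modnMmr -{1}(subnK m_gt0) addn1 expnS mulnA.
by rewrite -modnMml de1 modnMml mul1n.
Qed.

Theorem mainTheorem2 (d e n : nat) :
  0 < d -> 0 < e -> 1 < n -> coprime e n ->
  d * e = 1 %[mod carmichael n] ->
  0 < omega e (omega e n) /\
  d = e ^ (omega e (omega e n) - 1) %[mod omega e n].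
Proof.
move=> _ _ _ cop de1.
have k_dvd_lambda : omega e n %| carmichael n := omega_dvdn cop (carmichael_exp cop).
have de1_k : d * e = 1 %[mod omega e n] by rewrite -(modn_dvdm _ k_dvd_lambda) de1 modn_dvdm.
have [m_gt0 em1 _] := omega_spec (coprime_of_mul_modn1 de1_k).
by split=> //; apply: modn_inv_expn.
Qed.
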